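(* For $i=0,1$ let $\mathcal L_i$ be a cabled linkage in $\mathbb R^n$ which is (strongly) functional for $f_i\colon(\mathbb R^n)^{k_i}\to(\mathbb R^n)^{m_i}$ with restricted domain $U_i$. Let $\mathcal L$ be the disjoint union of $\mathcal L_0$ and $\mathcal L_1$ (with input and output vertices those of $\mathcal L_0$ followed by those of $\mathcal L_1$). Then: (1) $\mathcal L$ is (strongly) functional for $f_0\times f_1\colon(\mathbb R^n)^{k_0}\times(\mathbb R^n)^{k_1}\to(\mathbb R^n)^{m_0}\times(\mathbb R^n)^{m_1}$ with restricted domain $U_0\times U_1$; (2) if $k_0=k_1$, and $\mathcal L'$ is obtained from $\mathcal L$ by identifying the $j$-th input vertex of $\mathcal L_0$ with the $j$-th input vertex of $\mathcal L_1$ for each $j$, then $\mathcal L'$ is (strongly) functional for $(f_0,f_1)\colon(\mathbb R^n)^{k_0}\to(\mathbb R^n)^{m_0}\times(\mathbb R^n)^{m_1}$ with restricted domain $U_0\cap U_1$.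
   Context: A cabled linkage in $\mathbb R^n$ is $\mathcal L=(L,\ell,V,\mu,F)$: $L$ a finite one-dimensional simplicial complex (vertex set $\mathcal V(L)$, edge set $\mathcal E(L)$), $\ell\colon\mathcal E(L)\to(0,\infty)$, $V\subset\mathcal V(L)$ fixed vertices, $\mu\colon V\to\mathbb R^n$, $F\subset\mathcal E(L)$ flexible edges. $\mathcal C(\mathcal L)=\{\varphi\colon\mathcal V(L)\to\mathbb R^n\mid\varphi(v)=\mu(v)\ (v\in V),\ |\varphi(v)-\varphi(w)|\le\ell(vw)\ (vw\in F),\ |\varphi(v)-\varphi(w)|=\ell(vw)\ (vw\in\mathcal E(L)\setminus F)\}$. $\mathcal L$ is quasifunctional for $f\colon(\mathbb R^n)^k\to(\mathbb R^n)^m$ if there are vertices $w_1,\dots,w_k$ (input) and $v_1,\dots,v_m$ (output), repetitions allowed, with input map $q(\varphi)=(\varphi(w_1),\dots,\varphi(w_k))$, output map $p(\varphi)=(\varphi(v_1),\dots,\varphi(v_m))$ and $p=f\circ q$; its domain is $q(\mathcal C(\mathcal L))$. It is functional with restricted domain $U\subset q(\mathcal C(\mathcal L))$ if there are a finite set $E$ and an analytic isomorphism $\sigma\colon U\times E\to q^{-1}(U)$ with $q(\sigma(u,c))=u$; strongly functional if $q\colon\mathcal C(\mathcal L)\to q(\mathcal C(\mathcal L))$ is an analytic isomorphism, and strongly functional with restricted domain $U$ if also $U\subset q(\mathcal C(\mathcal L))$. An analytic isomorphism is a homeomorphism $h$ with $h,h^{-1}$ restrictions of analytic maps. *)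

From HB Require Import structures.
From mathcomp Require Import all_boot all_order all_algebra.
From mathcomp Require Import all_classical all_reals all_analysis.

Set Implicit Arguments.
Unset Strict Implicit.
Unset Printing Implicit Defensive.

Import Order.TTheory GRing.Theory Num.Theory.
Import numFieldNormedType.Exports.
Local Open Scope classical_set_scope.
Local Open Scope ring_scope.

Section Analytic.
Variable R : realType.

Definition monom (I : finType) (alpha : I -> nat) (x : I -> R) : R :=
  \prod_i x i ^+ alpha i.

Definition hom_part (I : finType) (c : (I -> nat) -> R) (a x : I -> R) (d : nat) : R :=
  \sum_(alpha : {ffun I -> 'I_d.+1} | (\sum_i (alpha i : nat) == d)%N)
     c (fun i => (alpha i : nat)) * monom (fun i => (alpha i : nat)) (fun i => x i - a i).

Definition abs_hom_part (I : finType) (c : (I -> nat) -> R) (a x : I -> R) (d : nat) : R :=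
  \sum_(alpha : {ffun I -> 'I_d.+1} | (\sum_i (alpha i : nat) == d)%N)
     `| c (fun i => (alpha i : nat)) * monom (fun i => (alpha i : nat)) (fun i => x i - a i) |.

Definition analytic_at (I : finType) (f : (I -> R) -> R) (a : I -> R) : Prop :=
  exists r : R, 0 < r /\
  exists c : (I -> nat) -> R,
    forall x : I -> R, (forall i, `|x i - a i| < r) ->
      cvgn (series (abs_hom_part c a x)) /\
      f x = limn (series (hom_part c a x)).

Definition open_set (I : finType) (W : set (I -> R)) : Prop :=
  forall a, W a -> exists r : R, 0 < r /\
    forall x, (forall i, `|x i - a i| < r) -> W x.

Definition analytic_on (I J : finType) (W : set (I -> R)) (F : (I -> R) -> (J -> R)) : Prop :=
  open_set W /\ forall a, W a -> forall j, analytic_at (fun x => F x j) a.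

Definition restr_analytic (I J : finType) (A : set (I -> R)) (h : (I -> R) -> (J -> R)) : Prop :=
  exists (W : set (I -> R)) (F : (I -> R) -> (J -> R)),
    A `<=` W /\ analytic_on W F /\ forall x, A x -> F x = h x.

Definition continuous_on (I J : finType) (A : set (I -> R)) (h : (I -> R) -> (J -> R)) : Prop :=
  forall a, A a -> forall eps : R, 0 < eps -> exists delta : R, 0 < delta /\
    forall x, A x -> (forall i, `|x i - a i| < delta) -> forall j, `|h x j - h a j| < eps.

Definition analytic_iso (I J : finType) (A : set (I -> R)) (B : set (J -> R))
    (h : (I -> R) -> (J -> R)) : Prop :=
  exists g : (J -> R) -> (I -> R),
    (forall x, A x -> B (h x)) /\ (forall y, B y -> A (g y)) /\
    (forall x, A x -> g (h x) = x) /\ (forall y, B y -> h (g y) = y) /\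
    continuous_on A h /\ continuous_on B g /\
    restr_analytic A h /\ restr_analytic B g.

End Analytic.

(* Points of R^n are functions 'I_n -> R; configurations phi : V(L) -> R^n  *)
(* are stored uncurried as functions V(L) * 'I_n -> R, so that the          *)
(* configuration space is a subset of a coordinate space R^(V(L) x n).      *)
Record lk_linkage (R : realType) (n : nat) := Linkage {
  vert : finType;
  edge : finType;
  src : edge -> vert;
  dst : edge -> vert;
  len : edge -> R;
  flex : pred edge;
  pin : finType;                     (* indexes the fixed vertices V *)
  pinv : pin -> vert;                (* V = image of pinv *)
  pinpos : pin -> 'I_n -> R          (* mu (pinv p) = pinpos p *)
}.

Arguments vert {R n}.
Arguments edge {R n}.
Arguments src {R n}.
Arguments dst {R n}.
Arguments len {R n}.
Arguments flex {R n}.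
Arguments pin {R n}.
Arguments pinv {R n}.
Arguments pinpos {R n}.

(* the data form a cabled linkage: L is a one-dimensional simplicial complex
   (edges join two distinct vertices, distinct edges have distinct vertex
   pairs), lengths are positive, and V ⊂ V(L) with mu : V -> R^n (pinv is
   injective). *)
Definition cabled_linkage (R : realType) (n : nat) (L : lk_linkage R n) : Prop :=
  (forall e, src L e != dst L e) /\
  (forall e e', [set src L e; dst L e]%SET = [set src L e'; dst L e']%SET -> e = e') /\
  (forall e, 0 < len L e) /\
  injective (pinv L).

Definition edist (R : realType) (n : nat) (x y : 'I_n -> R) : R :=
  Num.sqrt (\sum_i (x i - y i) ^+ 2).

Definition vpos (R : realType) (n : nat) (L : lk_linkage R n)
   (phi : vert L * 'I_n -> R) (v : vert L) : 'I_n -> R := fun j => phi (v, j).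

Definition config (R : realType) (n : nat) (L : lk_linkage R n) : set (vert L * 'I_n -> R) :=
  fun phi =>
    (forall p, vpos phi (pinv L p) = pinpos L p) /\
    (forall e, if flex L e
               then edist (vpos phi (src L e)) (vpos phi (dst L e)) <= len L e
               else edist (vpos phi (src L e)) (vpos phi (dst L e)) == len L e).

Arguments config {R n} L _.

Notation tup R k n := ('I_k * 'I_n -> R).

Definition vmap (R : realType) (n k : nat) (L : lk_linkage R n) (w : 'I_k -> vert L)
   (phi : vert L * 'I_n -> R) : tup R k n :=
  fun p => phi (w p.1, p.2).

Definition quasifunctional (R : realType) (n k m : nat) (L : lk_linkage R n)
   (w : 'I_k -> vert L) (v : 'I_m -> vert L) (f : tup R k n -> tup R m n) : Prop :=
  forall phi, config L phi -> vmap v phi = f (vmap w phi).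

Definition qdomain (R : realType) (n k : nat) (L : lk_linkage R n) (w : 'I_k -> vert L)
  : set (tup R k n) := vmap w @` config L.

(* U x E where the finite set E is realised as {0,..,e-1} ⊂ R, placed in the
   extra coordinate None *)
Definition prodE (R : realType) (n k : nat) (U : set (tup R k n)) (e : nat)
  : set (option ('I_k * 'I_n) -> R) :=
  fun z => U (fun p => z (Some p)) /\ exists c : 'I_e, z None = (c%:R : R).

Definition lk_functional (R : realType) (n k m : nat) (L : lk_linkage R n)
   (w : 'I_k -> vert L) (v : 'I_m -> vert L) (f : tup R k n -> tup R m n)
   (U : set (tup R k n)) : Prop :=
  quasifunctional w v f /\ U `<=` qdomain w /\
  exists (e : nat) (sigma : (option ('I_k * 'I_n) -> R) -> (vert L * 'I_n -> R)),
    analytic_iso (prodE U e) (config L `&` (vmap w @^-1` U)) sigma /\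
    (forall z, prodE U e z -> vmap w (sigma z) = (fun p => z (Some p))).

Definition lk_strongly_functional (R : realType) (n k m : nat) (L : lk_linkage R n)
   (w : 'I_k -> vert L) (v : 'I_m -> vert L) (f : tup R k n -> tup R m n)
   (U : set (tup R k n)) : Prop :=
  quasifunctional w v f /\ U `<=` qdomain w /\
  analytic_iso (config L) (qdomain w) (vmap w).

Definition sum_map (A B C : Type) (f : A -> C) (g : B -> C) (x : A + B) : C :=
  match x with inl a => f a | inr b => g b end.

Definition disj_union (R : realType) (n : nat) (L0 L1 : lk_linkage R n) : lk_linkage R n :=
  @Linkage R n ((vert L0 + vert L1)%type) ((edge L0 + edge L1)%type)
    (sum_map (fun e => inl (src L0 e)) (fun e => inr (src L1 e)))
    (sum_map (fun e => inl (dst L0 e)) (fun e => inr (dst L1 e)))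
    (sum_map (len L0) (len L1))
    (sum_map (flex L0) (flex L1))
    ((pin L0 + pin L1)%type)
    (sum_map (fun p => inl (pinv L0 p)) (fun p => inr (pinv L1 p)))
    (sum_map (pinpos L0) (pinpos L1)).

Definition lk_cat (R : realType) (n k0 k1 : nat) (L0 L1 : lk_linkage R n)
   (w0 : 'I_k0 -> vert L0) (w1 : 'I_k1 -> vert L1) : 'I_(k0 + k1) -> vert (disj_union L0 L1) :=
  fun i => match fintype.split i with inl j => inl (w0 j) | inr j => inr (w1 j) end.

Definition tup_l (R : realType) (n k0 k1 : nat) (u : tup R (k0 + k1) n) : tup R k0 n :=
  fun p => u (lshift k1 p.1, p.2).
Definition tup_r (R : realType) (n k0 k1 : nat) (u : tup R (k0 + k1) n) : tup R k1 n :=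
  fun p => u (rshift k0 p.1, p.2).
Definition tup_cat (R : realType) (n m0 m1 : nat) (a : tup R m0 n) (b : tup R m1 n)
  : tup R (m0 + m1) n :=
  fun p => match fintype.split p.1 with inl j => a (j, p.2) | inr j => b (j, p.2) end.

Definition lk_fprod (R : realType) (n k0 k1 m0 m1 : nat)
   (f0 : tup R k0 n -> tup R m0 n) (f1 : tup R k1 n -> tup R m1 n)
   : tup R (k0 + k1) n -> tup R (m0 + m1) n :=
  fun u => tup_cat (f0 (tup_l u)) (f1 (tup_r u)).

Definition lk_dprod (R : realType) (n k0 k1 : nat) (U0 : set (tup R k0 n)) (U1 : set (tup R k1 n))
  : set (tup R (k0 + k1) n) :=
  fun u => U0 (tup_l u) /\ U1 (tup_r u).

Definition lk_fpair (R : realType) (n k m0 m1 : nat)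
   (f0 : tup R k n -> tup R m0 n) (f1 : tup R k n -> tup R m1 n)
   : tup R k n -> tup R (m0 + m1) n :=
  fun u => tup_cat (f0 u) (f1 u).

(* Identification of vertices: quotient of the vertex set by the           *)
(* equivalence relation generated by  w0 j ~ w1 j  (j < k).                 *)
Section Glue.
Variables (R : realType) (n k : nat) (L0 L1 : lk_linkage R n).
Variables (w0 : 'I_k -> vert L0) (w1 : 'I_k -> vert L1).

Local Notation V := (vert (disj_union L0 L1)).

Definition glue_rel : rel V := fun x y =>
  [exists j, ((x == inl (w0 j)) && (y == inr (w1 j))) ||
             ((y == inl (w0 j)) && (x == inr (w1 j)))].

Definition glue_class (x : V) : {set V} := [set y | connect glue_rel x y].

Definition glue_vert : finType := {X : {set V} | [exists x, X == glue_class x]}.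

Definition glue_proj (x : V) : glue_vert :=
  exist _ (glue_class x) (introT existsP (ex_intro (fun y => glue_class x == glue_class y) x (eqxx _))).

Definition glue_linkage : lk_linkage R n :=
  let L := disj_union L0 L1 in
  @Linkage R n glue_vert (edge L)
    (fun e => glue_proj (src L e)) (fun e => glue_proj (dst L e))
    (len L) (flex L) (pin L) (fun p => glue_proj (pinv L p)) (pinpos L).

End Glue.

From HB Require Import structures.
From mathcomp Require Import all_boot all_order all_algebra.
From mathcomp Require Import all_classical all_reals all_analysis.

Set Implicit Arguments.
Unset Strict Implicit.
Unset Printing Implicit Defensive.

Import Order.TTheory GRing.Theory Num.Theory.
Import numFieldNormedType.Exports.
Local Open Scope classical_set_scope.
Local Open Scope ring_scope.

(** The configurations of a disjoint union are the pairs of configurations of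
    the two pieces, so the isomorphisms for the union are assembled
    coordinatewise from those of the pieces.  Their coordinates are obtained from
    the given ones by precomposing with maps that are locally substitutions
    (every coordinate is an input coordinate or a constant) and by linear
    combinations; composing a power series with a substitution only regroups its
    coefficients, which keeps everything analytic.  In the functional case
    [E0 x E1] is coded by [c0 + e0 * c1] and decoded by rounding, which is
    locally constant near the codes.  Identifying the input vertices amounts to
    restricting the isomorphism of the disjoint union to the configurations whose
    two inputs agree, followed by a reindexing of coordinates. *)

Lemma big_fibers_option (T : Type) (idx : T) (op : Monoid.com_law idx)
   (I I0 : finType) (s : I0 -> option I) (F : I0 -> I -> T) :
  \big[op/idx]_(j : I) \big[op/idx]_(i0 : I0 | s i0 == Some j) F i0 j =
  \big[op/idx]_(i0 : I0) (if s i0 is Some j then F i0 j else idx).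
Proof.
under eq_bigr do rewrite big_mkcond.
rewrite exchange_big; apply: eq_bigr => i0 _.
case: (s i0) => [j0|]; last by rewrite big1.
rewrite (bigD1 j0) //= eqxx big1 ?Monoid.mulm1 // => j /negbTE nj.
by case: eqP => // -[] /esym/eqP; rewrite nj.
Qed.

Lemma big_unit (T : Type) (idx : T) (op : Monoid.law idx) (F : unit -> T) :
  \big[op/idx]_(i : unit) F i = F tt.
Proof. by apply: big_pred1 => -[]. Qed.

Lemma ffun_unit_sum_eq d (al : {ffun unit -> 'I_d.+1}) :
  (\sum_i al i == d)%N = (al == [ffun => ord_max]).
Proof.
rewrite big_unit; apply/eqP/eqP => [al_d|->]; last by rewrite ffunE.
by apply/ffunP => -[]; rewrite ffunE; apply: val_inj.
Qed.

(** * Analytic functions and substitutions *)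

Section Analytic.
Variable R : realType.

Definition box (I : finType) (x a : I -> R) (r : R) := forall i, `|x i - a i| < r.

Lemma box_le (I : finType) (x a : I -> R) r r' : r <= r' -> box x a r -> box x a r'.
Proof. by move=> le_rr' xa i; apply: lt_le_trans (xa i) le_rr'. Qed.

Lemma box_center (I : finType) (a : I -> R) r : 0 < r -> box a a r.
Proof. by move=> r_gt0 i; rewrite subrr normr0. Qed.

Lemma box_minl (I : finType) (x a : I -> R) r r' : box x a (Num.min r r') -> box x a r.
Proof. by apply: box_le; rewrite ge_min lexx. Qed.

Lemma box_minr (I : finType) (x a : I -> R) r r' : box x a (Num.min r r') -> box x a r'.
Proof. by apply: box_le; rewrite ge_min lexx orbT. Qed.

Lemma analytic_at_eq_near (I : finType) (f g : (I -> R) -> R) (a : I -> R) (r : R) :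
  0 < r -> (forall x, box x a r -> f x = g x) ->
  analytic_at f a -> analytic_at g a.
Proof.
move=> r_gt0 fg [r' [r'_gt0 [c Hc]]].
exists (Num.min r r'); split; first by rewrite lt_min r_gt0 r'_gt0.
exists c => x xa; have [cv fx] := Hc x (box_minr xa).
by split => //; rewrite -fg //; apply: box_minl xa.
Qed.

Section Substitution.
Variables (I I0 : finType) (s : I0 -> option I) (kap : I0 -> R).

Definition substv (x : I -> R) : I0 -> R :=
  fun i0 => if s i0 is Some j then x j else kap i0.

Definition subst_supported (al : I0 -> nat) : bool :=
  [forall i0, (s i0 == None) ==> (al i0 == 0%N)].

Definition push_index (al : I0 -> nat) (j : I) : nat :=
  (\sum_(i0 | s i0 == Some j) al i0)%N.

Definition subst_coef_deg (c : (I0 -> nat) -> R) (d : nat) (be : I -> nat) : R :=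
  \sum_(al : {ffun I0 -> 'I_d.+1} |
     [forall j, push_index (fun i => al i : nat) j == be j] &&
     subst_supported (fun i => al i : nat)) c (fun i => al i : nat).

(** Coefficients of the composite series: [x^be] collects all [y^al] whose
    pushed-forward multi-index is [be]. *)
Definition subst_coef (c : (I0 -> nat) -> R) (be : I -> nat) : R :=
  subst_coef_deg c (\sum_j be j) be.

Lemma sum_push_index al : subst_supported al ->
  (\sum_j push_index al j = \sum_i0 al i0)%N.
Proof.
move=> al_supp; rewrite (big_fibers_option addn s (fun i0 _ => al i0)).
apply: eq_bigr => i0 _; case E: (s i0) => [j|] //.
by move/forallP: al_supp => /(_ i0); rewrite E eqxx => /eqP ->.
Qed.

Lemma push_index_le al j : (push_index al j <= \sum_i0 al i0)%N.
Proof. by rewrite /push_index big_mkcond leq_sum // => i0 _; case: ifP. Qed.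

Lemma monom_push_index (x a : I -> R) al : subst_supported al ->
  monom (push_index al) (fun j => x j - a j) =
  monom al (fun i0 => substv x i0 - substv a i0).
Proof.
move=> al_supp; rewrite /monom /push_index.
under eq_bigr do rewrite -prodrXr.
rewrite (eq_bigr (fun j => \prod_(i0 | s i0 == Some j)
   (substv x i0 - substv a i0) ^+ al i0)); last first.
  by move=> j _; apply: eq_bigr => i0 /eqP E; rewrite /substv E.
rewrite (big_fibers_option _ s (fun i0 _ => (substv x i0 - substv a i0) ^+ al i0)).
apply: eq_bigr => i0 _; case E: (s i0) => [j|] //.
by move/forallP: al_supp => /(_ i0); rewrite E eqxx => /eqP ->; rewrite expr0.
Qed.

Lemma monom_subst_unsupported (x a : I -> R) al : ~~ subst_supported al ->
  monom al (fun i0 => substv x i0 - substv a i0) = 0.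
Proof.
rewrite negb_forall => /existsP[i0]; rewrite negb_imply => /andP[/eqP E al_i0].
by rewrite /monom (bigD1 i0) //= /substv E subrr expr0n (negbTE al_i0) mul0r.
Qed.

Lemma sum_push_index_fibers (G : (I0 -> nat) -> (I -> nat) -> R) d :
  \sum_(be : {ffun I -> 'I_d.+1} | (\sum_j be j == d)%N)
    \sum_(al : {ffun I0 -> 'I_d.+1} |
       [forall j, push_index (fun i => al i : nat) j == be j] &&
       subst_supported (fun i => al i : nat))
      G (fun i => al i : nat) (fun j => be j : nat)
  = \sum_(al : {ffun I0 -> 'I_d.+1} |
       (\sum_i al i == d)%N && subst_supported (fun i => al i : nat))
      G (fun i => al i : nat) (push_index (fun i => al i : nat)).
Proof.
pose push (al : {ffun I0 -> 'I_d.+1}) : {ffun I -> 'I_d.+1} :=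
  [ffun j => inord (push_index (fun i => al i : nat) j)].
have pushE (al : {ffun I0 -> 'I_d.+1}) j : (\sum_i al i == d)%N ->
    push al j = push_index (fun i => al i : nat) j :> nat.
  move=> /eqP al_d; rewrite ffunE inordK // ltnS.
  by apply: leq_trans (push_index_le _ _) _; rewrite al_d.
rewrite [RHS](partition_big push (fun be => \sum_j be j == d)%N); last first.
  move=> al /andP[al_d al_supp].
  rewrite (eq_bigr (fun j => push_index (fun i => al i : nat) j)) => [|j _].
    by rewrite sum_push_index.
  by rewrite pushE.
apply: eq_bigr => be /eqP be_d; apply: eq_big => [al|al /andP[/forallP al_be _]].
  apply/idP/idP => [/andP[/forallP al_be al_supp]|/andP[/andP[al_d al_supp] /eqP <-]].
    have al_d : (\sum_i al i = d)%N.
      rewrite -(sum_push_index al_supp) -[in RHS]be_d; apply: eq_bigr => j _.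
      exact/eqP/al_be.
    rewrite al_d eqxx al_supp; apply/eqP/ffunP => j; apply: val_inj => /=.
    by rewrite pushE ?al_d //; apply/eqP/al_be.
  by rewrite al_supp andbT; apply/forallP => j; rewrite pushE.
by congr G; apply: funext => j; apply/esym/eqP/al_be.
Qed.

Lemma hom_part_subst c a x d :
  hom_part (subst_coef c) a x d = hom_part c (substv a) (substv x) d.
Proof.
rewrite /hom_part.
transitivity (\sum_(be : {ffun I -> 'I_d.+1} | (\sum_j be j == d)%N)
    \sum_(al : {ffun I0 -> 'I_d.+1} |
       [forall j, push_index (fun i => al i : nat) j == be j] &&
       subst_supported (fun i => al i : nat))
      c (fun i => al i : nat) * monom (fun j => be j : nat) (fun i => x i - a i)).
  by apply: eq_bigr => be /eqP be_d; rewrite /subst_coef be_d mulr_suml.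
rewrite (sum_push_index_fibers (fun al be => c al * monom be (fun i => x i - a i))).
rewrite [RHS](bigID (fun al : {ffun I0 -> 'I_d.+1} =>
  subst_supported (fun i => al i : nat))) /=.
rewrite [X in _ = _ + X]big1 ?addr0 => [|al /andP[_ al_unsupp]]; last first.
  by rewrite monom_subst_unsupported // mulr0.
by apply: eq_bigr => al /andP[_ al_supp]; rewrite monom_push_index.
Qed.

Lemma abs_hom_part_subst c a x d :
  abs_hom_part (subst_coef c) a x d <= abs_hom_part c (substv a) (substv x) d.
Proof.
rewrite /abs_hom_part.
apply: (@le_trans _ _ (\sum_(be : {ffun I -> 'I_d.+1} | (\sum_j be j == d)%N)
    \sum_(al : {ffun I0 -> 'I_d.+1} |
       [forall j, push_index (fun i => al i : nat) j == be j] &&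
       subst_supported (fun i => al i : nat))
      `|c (fun i => al i : nat)| * `|monom (fun j => be j : nat) (fun i => x i - a i)|)).
  apply: ler_sum => be /eqP be_d; rewrite /subst_coef be_d normrM -mulr_suml.
  by apply: ler_wpM2r => //; apply: ler_norm_sum.
rewrite (sum_push_index_fibers (fun al be => `|c al| * `|monom be (fun i => x i - a i)|)).
rewrite [X in _ <= X](bigID (fun al : {ffun I0 -> 'I_d.+1} =>
  subst_supported (fun i => al i : nat))) /=.
rewrite [X in _ <= _ + X]big1 ?addr0 => [|al /andP[_ al_unsupp]]; last first.
  by rewrite monom_subst_unsupported // mulr0 normr0.
by apply: ler_sum => al /andP[_ al_supp]; rewrite monom_push_index // normrM.
Qed.

Lemma analytic_at_subst (F : (I0 -> R) -> R) (a : I -> R) :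
  analytic_at F (substv a) -> analytic_at (fun x => F (substv x)) a.
Proof.
move=> [r [r_gt0 [c Hc]]]; exists r; split => //; exists (subst_coef c) => x xa.
have sxa : box (substv x) (substv a) r.
  by move=> i0; rewrite /substv; case: (s i0) => [j|]; [apply: xa | rewrite subrr normr0].
have [cv ->] := Hc _ sxa; split.
  apply: (series_le_cvg _ _ _ cv) => d; [exact: sumr_ge0|exact: sumr_ge0|].
  exact: abs_hom_part_subst.
by congr (limn (series _)); apply: funext => d; rewrite hom_part_subst.
Qed.

End Substitution.

Lemma analytic_at_lin (I : finType) (f g : (I -> R) -> R) (a : I -> R) (k : R) :
  analytic_at f a -> analytic_at g a -> analytic_at (fun x => f x + k * g x) a.
Proof.
move=> [r1 [r1_gt0 [c1 H1]]] [r2 [r2_gt0 [c2 H2]]].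
exists (Num.min r1 r2); split; first by rewrite lt_min r1_gt0 r2_gt0.
exists (fun al => c1 al + k * c2 al) => x xa.
have [cv1 ->] := H1 x (box_minl xa); have [cv2 ->] := H2 x (box_minr xa).
have series_lin (A B : nat -> R) (l : R) :
    series (fun d => A d + l * B d) = fun N => series A N + l * series B N.
  by apply: funext => N; rewrite !seriesEnat /= big_split /= -mulr_sumr.
have cvg_lin (u v : nat -> R) (l : R) : cvgn u -> cvgn v ->
    (fun N => u N + l * v N) @ \oo --> limn u + l * limn v.
  by move=> cu cv; apply: cvgD => //; apply: cvgMl_tmp.
have abs_cvg (c : (I -> nat) -> R) :
    cvgn (series (abs_hom_part c a x)) -> cvgn (series (hom_part c a x)).
  move=> cv; apply: normed_cvg.
  by apply: (series_le_cvg _ _ _ cv) => d /=; [|exact: sumr_ge0|exact: ler_norm_sum].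
have hom_lin : hom_part (fun al => c1 al + k * c2 al) a x =
    fun d => hom_part c1 a x d + k * hom_part c2 a x d.
  apply: funext => d; rewrite /hom_part mulr_sumr -big_split.
  by apply: eq_bigr => al _; rewrite mulrDl !mulrA.
split; last first.
  by rewrite hom_lin series_lin; apply/esym/cvg_lim => //; apply: cvg_lin; apply: abs_cvg.
have abs_le d : abs_hom_part (fun al => c1 al + k * c2 al) a x d <=
    abs_hom_part c1 a x d + `|k| * abs_hom_part c2 a x d.
  rewrite /abs_hom_part mulr_sumr -big_split; apply: ler_sum => al _.
  by rewrite mulrDl -mulrA -normrM; apply: ler_normD.
apply: (series_le_cvg _ _ abs_le) => [d|d|]; first exact: sumr_ge0.
  by apply: addr_ge0; [apply: sumr_ge0 | apply: mulr_ge0 => //; apply: sumr_ge0].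
by rewrite series_lin; apply/cvg_ex; eexists; apply: cvg_lin.
Qed.

Lemma hom_part_unit (c : (unit -> nat) -> R) a x d :
  hom_part c a x d = c (fun _ => d) * (x tt - a tt) ^+ d.
Proof.
rewrite /hom_part (eq_bigl _ _ (@ffun_unit_sum_eq d)) big_pred1_eq /monom big_unit ffunE.
by congr (c _ * _); apply: funext => -[]; rewrite ffunE.
Qed.

Lemma abs_hom_part_unit (c : (unit -> nat) -> R) a x d :
  abs_hom_part c a x d = `|hom_part c a x d|.
Proof.
by rewrite /abs_hom_part /hom_part !(eq_bigl _ _ (@ffun_unit_sum_eq d)) !big_pred1_eq.
Qed.

(** Centred at [a], the identity is the two-term power series [a + (x - a)]. *)
Lemma analytic_at_id_unit (a : unit -> R) : analytic_at (fun y : unit -> R => y tt) a.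
Proof.
pose c (al : unit -> nat) := if al tt == 0%N then a tt else if al tt == 1%N then 1 else 0.
have hom_ge2 x d : (2 <= d)%N -> hom_part c a x d = 0.
  by rewrite hom_part_unit /c; case: d => [|[|d]] // _; rewrite mul0r.
have series_two (u : nat -> R) : (forall d, (2 <= d)%N -> u d = 0) ->
    series u @ \oo --> u 0%N + u 1%N.
  move=> u_ge2; apply: cvg_near_cst; exists 2%N => // -[|[|N]] // _.
  rewrite seriesEnat /= big_ltn // big_ltn // big_nat_cond big1 ?addr0 //.
  by move=> d /andP[/andP[d_ge2 _] _]; apply: u_ge2.
exists 1; split => //; exists c => x _; split.
  apply/cvg_ex; eexists; apply: series_two => d d_ge2.
  by rewrite abs_hom_part_unit hom_ge2 // normr0.
apply/esym/cvg_lim => //; rewrite [x tt](_ : _ = hom_part c a x 0 + hom_part c a x 1).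
  exact: series_two (hom_ge2 x).
by rewrite !hom_part_unit /c /= expr0 mulr1 expr1 mul1r addrC subrK.
Qed.

Lemma analytic_at_coord (I : finType) (j : I) (a : I -> R) :
  analytic_at (fun x : I -> R => x j) a.
Proof.
exact: (@analytic_at_subst I unit (fun _ => Some j) (fun _ => 0) _ a (analytic_at_id_unit _)).
Qed.

End Analytic.

Section AnalyticMaps.
Variable R : realType.

Lemma exists_pos_lb (J : finType) (d : J -> R) :
  (forall j, 0 < d j) -> exists2 m, 0 < m & forall j, m <= d j.
Proof.
move=> d_gt0; exists (\big[Num.min/1]_j d j); last by move=> j; apply: bigmin_le.
by apply: lt_bigmin => // j _; apply: d_gt0.
Qed.

Lemma open_setT (I : finType) : open_set (@setT (I -> R)).
Proof. by move=> a _; exists 1. Qed.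

Definition continuous_on1 (I : finType) (A : set (I -> R)) (f : (I -> R) -> R) :=
  forall a, A a -> forall eps, 0 < eps -> exists delta, 0 < delta /\
    forall x, A x -> box x a delta -> `|f x - f a| < eps.

Definition restr_analytic1 (I : finType) (A : set (I -> R)) (f : (I -> R) -> R) :=
  exists (W : set (I -> R)) (F : (I -> R) -> R),
    [/\ A `<=` W, open_set W, forall a, W a -> analytic_at F a & forall x, A x -> F x = f x].

Lemma continuous_onP (I J : finType) (A : set (I -> R)) (h : (I -> R) -> J -> R) :
  continuous_on A h <-> forall j, continuous_on1 A (fun x => h x j).
Proof.
split=> [h_cont j a Aa eps eps_gt0|h_cont a Aa eps eps_gt0].
  have [delta [delta_gt0 Hdelta]] := h_cont a Aa eps eps_gt0.
  by exists delta; split => // x Ax xa; apply: Hdelta.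
have /choice[delta Hdelta] := fun j => h_cont j a Aa eps eps_gt0.
have [m m_gt0 m_le] := exists_pos_lb (fun j => (Hdelta j).1).
exists m; split => // x Ax xa j; apply: (Hdelta j).2 => //.
exact: box_le (m_le j) xa.
Qed.

Lemma restr_analyticP (I J : finType) (A : set (I -> R)) (h : (I -> R) -> J -> R) :
  restr_analytic A h <-> forall j, restr_analytic1 A (fun x => h x j).
Proof.
split=> [[W [F [AW [[W_open F_an] FE]]]] j|h_an].
  exists W, (fun x => F x j); split => // [a Wa|x Ax]; first exact: F_an.
  by rewrite FE.
have /choice[WF HWF] : forall j, exists WF : set (I -> R) * ((I -> R) -> R),
    [/\ A `<=` WF.1, open_set WF.1, forall a, WF.1 a -> analytic_at WF.2 a
       & forall x, A x -> WF.2 x = h x j].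
  by move=> j; have [W [F HWF]] := h_an j; exists (W, F).
pose W x := forall j, (WF j).1 x.
exists W, (fun x j => (WF j).2 x); split; [|split; [split|]].
- by move=> x Ax j; have [AW _ _ _] := HWF j; apply: AW.
- move=> a Wa; have /choice[r Hr] : forall j, exists r, 0 < r /\ forall x, box x a r -> (WF j).1 x.
    by move=> j; have [_ W_open _ _] := HWF j; apply: W_open (Wa j).
  have [m m_gt0 m_le] := exists_pos_lb (fun j => (Hr j).1).
  exists m; split => // x xa j; apply: (Hr j).2.
  exact: box_le (m_le j) xa.
- by move=> a Wa j; have [_ _ F_an _] := HWF j; apply: F_an.
- by move=> x Ax; apply: funext => j; have [_ _ _ ->] := HWF j.
Qed.

Lemma continuous_on_sub (I J : finType) (A B : set (I -> R)) (h : (I -> R) -> J -> R) :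
  B `<=` A -> continuous_on A h -> continuous_on B h.
Proof.
move=> BA h_cont a Ba eps eps_gt0; have [d [d_gt0 Hd]] := h_cont a (BA a Ba) eps eps_gt0.
by exists d; split => // x Bx; apply/Hd/BA.
Qed.

Lemma restr_analytic_sub (I J : finType) (A B : set (I -> R)) (h : (I -> R) -> J -> R) :
  B `<=` A -> restr_analytic A h -> restr_analytic B h.
Proof.
move=> BA [W [F [AW [F_an FE]]]]; exists W, F; split; last split => //.
  by move=> x /BA /AW.
by move=> x /BA /FE.
Qed.

Lemma open_setI (I : finType) (W1 W2 : set (I -> R)) :
  open_set W1 -> open_set W2 -> open_set (W1 `&` W2).
Proof.
move=> W1_open W2_open a [/W1_open [r1 [r1_gt0 H1]] /W2_open [r2 [r2_gt0 H2]]].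
exists (Num.min r1 r2); split; first by rewrite lt_min r1_gt0 r2_gt0.
by move=> x xa; split; [apply: H1 (box_minl xa) | apply: H2 (box_minr xa)].
Qed.

Lemma continuous_on1_coord (I : finType) (A : set (I -> R)) i :
  continuous_on1 A (fun x => x i).
Proof. by move=> a _ eps eps_gt0; exists eps; split => // x _; apply. Qed.

Lemma continuous_on1_lin (I : finType) (A : set (I -> R)) f g (k : R) :
  continuous_on1 A f -> continuous_on1 A g -> continuous_on1 A (fun x => f x + k * g x).
Proof.
move=> f_cont g_cont a Aa eps eps_gt0.
have k1_gt0 : 0 < `|k| + 1 by apply: ltr_wpDl.
have eps'_gt0 : 0 < eps / 2 / (`|k| + 1) by rewrite !divr_gt0.
have [d1 [d1_gt0 H1]] := f_cont a Aa _ eps'_gt0.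
have [d2 [d2_gt0 H2]] := g_cont a Aa _ eps'_gt0.
exists (Num.min d1 d2); split => [|x Ax xa]; first by rewrite lt_min d1_gt0.
have -> : f x + k * g x - (f a + k * g a) = (f x - f a) + k * (g x - g a).
  by rewrite mulrBr addrACA opprD.
apply: le_lt_trans (ler_normD _ _) _; rewrite normrM [eps]splitr.
have eps'_le : eps / 2 / (`|k| + 1) <= eps / 2.
  by rewrite ler_pdivrMr //; apply: ler_peMr; [apply: ltW; rewrite divr_gt0 | apply: ler_wpDl].
apply: ltr_leD; first exact: lt_le_trans (H1 x Ax (box_minl xa)) eps'_le.
apply: (@le_trans _ _ ((`|k| + 1) * (eps / 2 / (`|k| + 1)))).
  by apply: ler_pM => //; [rewrite lerDl | apply/ltW/(H2 x Ax (box_minr xa))].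
by rewrite mulrC divfK ?gt_eqF.
Qed.

Lemma continuous_on1_comp (I I0 : finType) (A : set (I -> R)) (B : set (I0 -> R)) f rho :
  continuous_on1 B f -> continuous_on A rho -> (forall x, A x -> B (rho x)) ->
  continuous_on1 A (fun x => f (rho x)).
Proof.
move=> f_cont rho_cont AB a Aa eps eps_gt0.
have [d [d_gt0 Hd]] := f_cont (rho a) (AB a Aa) eps eps_gt0.
have [d' [d'_gt0 Hd']] := rho_cont a Aa d d_gt0.
by exists d'; split => // x Ax xa; apply: Hd; [apply: AB | move=> j; apply: Hd'].
Qed.

Definition locally_subst (I I0 : finType) (D : set (I -> R)) (rho : (I -> R) -> I0 -> R) :=
  forall a, D a -> exists r, 0 < r /\ exists s kap, forall x, box x a r -> rho x = substv s kap x.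

Section LocallySubst.
Variables (I I0 : finType) (D : set (I -> R)) (rho : (I -> R) -> I0 -> R).
Hypothesis rho_loc : locally_subst D rho.

Lemma continuous_on_locally_subst (A : set (I -> R)) : A `<=` D -> continuous_on A rho.
Proof.
move=> AD; apply/continuous_onP => i0 a /AD Da eps eps_gt0.
have [r [r_gt0 [s [kap rhoE]]]] := rho_loc Da.
exists (Num.min r eps); split => [|x _ xa]; first by rewrite lt_min r_gt0.
rewrite (rhoE x (box_minl xa)) (rhoE a (box_center _ r_gt0)) /substv.
by case: (s i0) => [j|]; [apply: (box_minr xa j) | rewrite subrr normr0].
Qed.

Lemma analytic_at_comp_locally_subst (F : (I0 -> R) -> R) a :
  D a -> analytic_at F (rho a) -> analytic_at (fun x => F (rho x)) a.
Proof.
move=> Da F_an; have [r [r_gt0 [s [kap rhoE]]]] := rho_loc Da.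
apply: (analytic_at_eq_near r_gt0 (f := fun x => F (substv s kap x))).
  by move=> x xa; rewrite rhoE.
by apply: analytic_at_subst; rewrite -(rhoE a (box_center _ r_gt0)).
Qed.

Lemma open_locally_subst_preimage (W : set (I0 -> R)) :
  open_set D -> open_set W -> open_set (D `&` rho @^-1` W).
Proof.
move=> D_open W_open a [Da Wa].
have [r1 [r1_gt0 H1]] := D_open a Da.
have [r2 [r2_gt0 [s [kap rhoE]]]] := rho_loc Da.
have [r3 [r3_gt0 H3]] := W_open _ Wa.
exists (Num.min r1 (Num.min r2 r3)); split; first by rewrite !lt_min r1_gt0 r2_gt0.
move=> x xa; split; first exact: H1 (box_minl xa).
rewrite /preimage /= rhoE; last exact: box_minl (box_minr xa).
apply: H3 => i0; rewrite (rhoE a (box_center _ r2_gt0)) /substv.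
by case: (s i0) => [j|]; [apply: (box_minr (box_minr xa) j) | rewrite subrr normr0].
Qed.

Lemma restr_analytic1_comp (A : set (I -> R)) (B : set (I0 -> R)) f :
  open_set D -> A `<=` D -> (forall x, A x -> B (rho x)) ->
  restr_analytic1 B f -> restr_analytic1 A (fun x => f (rho x)).
Proof.
move=> D_open AD AB [W [F [BW W_open F_an FE]]].
exists (D `&` rho @^-1` W), (fun x => F (rho x)); split.
- by move=> x Ax; split; [apply: AD | apply/BW/AB].
- exact: open_locally_subst_preimage.
- by move=> a [Da Wa]; apply: analytic_at_comp_locally_subst (F_an _ Wa).
- by move=> x Ax; rewrite FE //; apply: AB.
Qed.

End LocallySubst.

Lemma restr_analytic1_coord (I : finType) (A : set (I -> R)) i :
  restr_analytic1 A (fun x => x i).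
Proof.
exists setT, (fun x => x i); split => // [|a _]; first exact: open_setT.
exact: analytic_at_coord.
Qed.

Lemma restr_analytic1_lin (I : finType) (A : set (I -> R)) f g (k : R) :
  restr_analytic1 A f -> restr_analytic1 A g -> restr_analytic1 A (fun x => f x + k * g x).
Proof.
move=> [Wf [F [AWf Wf_open F_an FE]]] [Wg [G [AWg Wg_open G_an GE]]].
exists (Wf `&` Wg), (fun x => F x + k * G x); split.
- by move=> x Ax; split; [apply: AWf | apply: AWg].
- exact: open_setI.
- by move=> a [Wfa Wga]; apply: analytic_at_lin; [apply: F_an | apply: G_an].
- by move=> x Ax; rewrite FE ?GE.
Qed.

Definition reindex (I J : finType) (s : J -> I) (x : I -> R) : J -> R := fun j => x (s j).

Lemma locally_subst_reindex (I J : finType) (s : J -> I) : locally_subst setT (reindex s).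
Proof. by move=> a _; exists 1; split => //; exists (fun j => Some (s j)), (fun _ => 0). Qed.

Lemma continuous_on_reindex (I J : finType) (A : set (I -> R)) (s : J -> I) :
  continuous_on A (reindex s).
Proof. by apply: (continuous_on_locally_subst (locally_subst_reindex s)). Qed.

Lemma continuous_on1_reindex (I J : finType) (A : set (J -> R)) (B : set (I -> R)) s f :
  (forall x, A x -> B (reindex s x)) ->
  continuous_on1 B f -> continuous_on1 A (fun x => f (reindex s x)).
Proof.
by move=> AB f_cont; apply: continuous_on1_comp f_cont _ AB; apply: continuous_on_reindex.
Qed.

Lemma restr_analytic1_reindex (I J : finType) (A : set (J -> R)) (B : set (I -> R)) s f :
  (forall x, A x -> B (reindex s x)) ->
  restr_analytic1 B f -> restr_analytic1 A (fun x => f (reindex s x)).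
Proof.
by move=> AB; apply: (restr_analytic1_comp (locally_subst_reindex s)) => //; apply: open_setT.
Qed.

End AnalyticMaps.

Section AnalyticIso.
Variable R : realType.

Definition reindex_bij (I I' : finType) (X : set (I -> R)) (Y : set (I' -> R))
    (s : I' -> I) (s' : I -> I') :=
  [/\ forall x, X x -> Y (reindex s x), forall y, Y y -> X (reindex s' y),
      forall x, X x -> reindex s' (reindex s x) = x
    & forall y, Y y -> reindex s (reindex s' y) = y].

Lemma reindex_bij_sym (I I' : finType) (X : set (I -> R)) (Y : set (I' -> R)) s s' :
  reindex_bij X Y s s' -> reindex_bij Y X s' s.
Proof. by case. Qed.

Lemma analytic_iso_ext (I J : finType) (A : set (I -> R)) (B : set (J -> R)) h h' :
  (forall x, A x -> h x = h' x) -> analytic_iso A B h -> analytic_iso A B h'.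
Proof.
move=> hh' [g [hAB [gBA [gK [hK [h_cont [g_cont [h_an g_an]]]]]]]].
exists g; split; first by move=> x Ax; rewrite -hh' //; apply: hAB.
split=> //; split; first by move=> x Ax; rewrite -hh' // gK.
split; first by move=> y By; rewrite -hh' ?hK //; apply: gBA.
split.
  move=> a Aa eps eps_gt0; have [d [d_gt0 Hd]] := h_cont a Aa eps eps_gt0.
  by exists d; split => // x Ax xa; rewrite -!hh' //; apply: Hd.
split=> //; split => //; have [W [F [AW [F_an FE]]]] := h_an.
by exists W, F; split => //; split => // x Ax; rewrite FE ?hh'.
Qed.

Lemma analytic_iso_sub (I J : finType) (A A1 : set (I -> R)) (B B1 : set (J -> R)) h :
  B1 `<=` B -> (forall x, A1 x <-> A x /\ B1 (h x)) ->
  analytic_iso A B h -> analytic_iso A1 B1 h.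
Proof.
move=> B1B A1E [g [hAB [gBA [gK [hK [h_cont [g_cont [h_an g_an]]]]]]]].
have A1A x : A1 x -> A x by move/A1E => [].
exists g; split; first by move=> x /A1E [].
split.
  by move=> y B1y; have By := B1B _ B1y; apply/A1E; rewrite hK //; split => //; apply: gBA.
split; first by move=> x /A1A; apply: gK.
split; first by move=> y /B1B; apply: hK.
split; first exact: continuous_on_sub h_cont.
split; first exact: continuous_on_sub g_cont.
by split; [apply: restr_analytic_sub h_an | apply: restr_analytic_sub g_an].
Qed.

Lemma analytic_iso_reindex (I J I' J' : finType) (A : set (I -> R)) (B : set (J -> R))
    (A' : set (I' -> R)) (B' : set (J' -> R)) h (a : I -> I') (a' : I' -> I)
    (b : J' -> J) (b' : J -> J') :
  reindex_bij A' A a a' -> reindex_bij B B' b b' ->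
  analytic_iso A B h -> analytic_iso A' B' (fun x => reindex b (h (reindex a x))).
Proof.
move=> [aA a'A' aK a'K] [bB' b'B bK b'K].
move=> [g [hAB [gBA [gK [hK [h_cont [g_cont [h_an g_an]]]]]]]].
exists (fun y => reindex a' (g (reindex b' y))).
split; first by move=> x /aA /hAB /bB'.
split; first by move=> y /b'B /gBA /a'A'.
split; first by move=> x /[dup] /aA Aax A'x; rewrite bK ?gK ?aK //; apply: hAB.
split; first by move=> y /[dup] /b'B Bby B'y; rewrite a'K ?hK ?b'K //; apply: gBA.
split.
  apply/continuous_onP => j; apply: (continuous_on1_reindex (f := h^~ (b j)) aA).
  exact: (continuous_onP _ _).1 h_cont (b j).
split.
  apply/continuous_onP => i; apply: (continuous_on1_reindex (f := g^~ (a' i)) b'B).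
  exact: (continuous_onP _ _).1 g_cont (a' i).
split.
  apply/restr_analyticP => j; apply: (restr_analytic1_reindex (f := h^~ (b j)) aA).
  exact: (restr_analyticP _ _).1 h_an (b j).
apply/restr_analyticP => i; apply: (restr_analytic1_reindex (f := g^~ (a' i)) b'B).
exact: (restr_analyticP _ _).1 g_an (a' i).
Qed.

End AnalyticIso.

(** * Disjoint unions *)

Lemma split_lshift m k (j : 'I_m) : fintype.split (lshift k j) = inl j.
Proof. exact: (unsplitK (inl j)). Qed.

Lemma split_rshift m k (j : 'I_k) : fintype.split (rshift m j) = inr j.
Proof. exact: (unsplitK (inr j)). Qed.

Section Tuples.
Variables (R : realType) (n k0 k1 : nat).

Lemma tup_l_cat (a : tup R k0 n) (b : tup R k1 n) : tup_l (tup_cat a b) = a.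
Proof. by apply: funext => -[j i]; rewrite /tup_l /tup_cat /= split_lshift. Qed.

Lemma tup_r_cat (a : tup R k0 n) (b : tup R k1 n) : tup_r (tup_cat a b) = b.
Proof. by apply: funext => -[j i]; rewrite /tup_r /tup_cat /= split_rshift. Qed.

Lemma tup_cat_lr (u : tup R (k0 + k1) n) : tup_cat (tup_l u) (tup_r u) = u.
Proof.
apply: funext => -[j i]; rewrite /tup_l /tup_r /tup_cat /=.
by case: split_ordP => j' ->.
Qed.

End Tuples.

Section DisjointUnion.
Variables (R : realType) (n : nat) (L0 L1 : lk_linkage R n).
Local Notation L := (disj_union L0 L1).

Definition cfg_l : (vert L * 'I_n -> R) -> vert L0 * 'I_n -> R :=
  reindex (fun p => (inl p.1, p.2)).
Definition cfg_r : (vert L * 'I_n -> R) -> vert L1 * 'I_n -> R :=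
  reindex (fun p => (inr p.1, p.2)).
Definition cfg_join (a : vert L0 * 'I_n -> R) (b : vert L1 * 'I_n -> R) : vert L * 'I_n -> R :=
  fun p => match p.1 with inl x => a (x, p.2) | inr y => b (y, p.2) end.

Lemma config_disj_union phi :
  config L phi <-> config L0 (cfg_l phi) /\ config L1 (cfg_r phi).
Proof.
split=> [[pinP edgeP]|[[pin0P edge0P] [pin1P edge1P]]].
  by split; split=> [p|e]; [apply: (pinP (inl p)) | apply: (edgeP (inl e))
                           | apply: (pinP (inr p)) | apply: (edgeP (inr e))].
by split=> [[p|p]|[e|e]]; [apply: pin0P | apply: pin1P | apply: edge0P | apply: edge1P].
Qed.

Lemma cfg_l_join a b : cfg_l (cfg_join a b) = a.
Proof. by apply: funext => -[]. Qed.

Lemma cfg_r_join a b : cfg_r (cfg_join a b) = b.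
Proof. by apply: funext => -[]. Qed.

Lemma cfg_join_lr phi : cfg_join (cfg_l phi) (cfg_r phi) = phi.
Proof. by apply: funext => -[[]]. Qed.

Lemma config_join a b : config L0 a -> config L1 b -> config L (cfg_join a b).
Proof. by move=> a_cfg b_cfg; apply/config_disj_union; rewrite cfg_l_join cfg_r_join. Qed.

Lemma vmap_cat k0 k1 (w0 : 'I_k0 -> vert L0) (w1 : 'I_k1 -> vert L1) phi :
  vmap (lk_cat w0 w1) phi = tup_cat (vmap w0 (cfg_l phi)) (vmap w1 (cfg_r phi)).
Proof. by apply: funext => -[i p]; rewrite /vmap /lk_cat /tup_cat /=; case: (fintype.split i). Qed.

Section Inputs.
Variables (k0 k1 : nat) (w0 : 'I_k0 -> vert L0) (w1 : 'I_k1 -> vert L1).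
Local Notation w := (lk_cat w0 w1).

Lemma tup_l_vmap phi : tup_l (vmap w phi) = vmap w0 (cfg_l phi).
Proof. by rewrite vmap_cat tup_l_cat. Qed.

Lemma tup_r_vmap phi : tup_r (vmap w phi) = vmap w1 (cfg_r phi).
Proof. by rewrite vmap_cat tup_r_cat. Qed.

Lemma qdomain_l u : qdomain w u -> qdomain w0 (tup_l u).
Proof.
move=> [phi /config_disj_union[phi0_cfg _] <-].
by exists (cfg_l phi); rewrite ?tup_l_vmap.
Qed.

Lemma qdomain_r u : qdomain w u -> qdomain w1 (tup_r u).
Proof.
move=> [phi /config_disj_union[_ phi1_cfg] <-].
by exists (cfg_r phi); rewrite ?tup_r_vmap.
Qed.

Lemma quasifunctional_disj_union m0 m1 (v0 : 'I_m0 -> vert L0) (v1 : 'I_m1 -> vert L1)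
    (f0 : tup R k0 n -> tup R m0 n) (f1 : tup R k1 n -> tup R m1 n) :
  quasifunctional w0 v0 f0 -> quasifunctional w1 v1 f1 ->
  quasifunctional w (lk_cat v0 v1) (lk_fprod f0 f1).
Proof.
move=> f0_q f1_q phi /config_disj_union[phi0_cfg phi1_cfg].
by rewrite /lk_fprod tup_l_vmap tup_r_vmap vmap_cat (f0_q _ phi0_cfg) (f1_q _ phi1_cfg).
Qed.

Lemma qdomain_disj_union (U0 : set (tup R k0 n)) (U1 : set (tup R k1 n)) :
  U0 `<=` qdomain w0 -> U1 `<=` qdomain w1 -> lk_dprod U0 U1 `<=` qdomain w.
Proof.
move=> U0q U1q u [/U0q [phi0 phi0_cfg phi0E] /U1q [phi1 phi1_cfg phi1E]].
exists (cfg_join phi0 phi1); first exact: config_join.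
by rewrite vmap_cat cfg_l_join cfg_r_join phi0E phi1E tup_cat_lr.
Qed.

Lemma analytic_iso_vmap_disj_union :
  analytic_iso (config L0) (qdomain w0) (vmap w0) ->
  analytic_iso (config L1) (qdomain w1) (vmap w1) ->
  analytic_iso (config L) (qdomain w) (vmap w).
Proof.
move=> [g0 [_ [g0_in [g0K [vmap_g0 [_ [g0_cont [_ g0_an]]]]]]]].
move=> [g1 [_ [g1_in [g1K [vmap_g1 [_ [g1_cont [_ g1_an]]]]]]]].
exists (fun u => cfg_join (g0 (tup_l u)) (g1 (tup_r u))).
split; first by move=> phi; exists phi.
split; first by move=> u qu; apply: config_join; [apply/g0_in/qdomain_l | apply/g1_in/qdomain_r].
split.
  move=> phi /config_disj_union[phi0_cfg phi1_cfg].
  by rewrite tup_l_vmap tup_r_vmap g0K // g1K // cfg_join_lr.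
split.
  move=> u qu; rewrite vmap_cat cfg_l_join cfg_r_join vmap_g0 ?vmap_g1 ?tup_cat_lr //.
    exact: qdomain_r.
  exact: qdomain_l.
split; first exact: continuous_on_reindex.
split.
  apply/continuous_onP => -[[x|y] i].
    exact: (continuous_on1_reindex (f := g0^~ (x, i)) qdomain_l ((continuous_onP _ _).1 g0_cont _)).
  exact: (continuous_on1_reindex (f := g1^~ (y, i)) qdomain_r ((continuous_onP _ _).1 g1_cont _)).
split; first by apply/restr_analyticP => j; apply: restr_analytic1_coord.
apply/restr_analyticP => -[[x|y] i].
  exact: (restr_analytic1_reindex (f := g0^~ (x, i)) qdomain_l ((restr_analyticP _ _).1 g0_an _)).
exact: (restr_analytic1_reindex (f := g1^~ (y, i)) qdomain_r ((restr_analyticP _ _).1 g1_an _)).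
Qed.

End Inputs.
End DisjointUnion.

Lemma lk_strongly_functional_disj_union (R : realType) (n k0 k1 m0 m1 : nat)
    (L0 L1 : lk_linkage R n) (w0 : 'I_k0 -> vert L0) (v0 : 'I_m0 -> vert L0)
    (w1 : 'I_k1 -> vert L1) (v1 : 'I_m1 -> vert L1)
    (f0 : tup R k0 n -> tup R m0 n) (f1 : tup R k1 n -> tup R m1 n)
    (U0 : set (tup R k0 n)) (U1 : set (tup R k1 n)) :
  lk_strongly_functional w0 v0 f0 U0 -> lk_strongly_functional w1 v1 f1 U1 ->
  lk_strongly_functional (lk_cat w0 w1) (lk_cat v0 v1) (lk_fprod f0 f1) (lk_dprod U0 U1).
Proof.
move=> [f0_q [U0q iso0]] [f1_q [U1q iso1]]; split; first exact: quasifunctional_disj_union.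
by split; [apply: qdomain_disj_union | apply: analytic_iso_vmap_disj_union].
Qed.

Section Decoding.
Variable R : realType.

(** Rounding to a code in [0 .. e-1] (junk value [0] away from the codes); it is
    locally constant near the codes. *)
Definition decode (e : nat) (t : R) : nat :=
  if [pick c : 'I_e | `|t - c%:R| < 2^-1] is Some c then c else 0%N.

Lemma eq_nat_dist_lt1 (c c' : nat) : `|c%:R - c'%:R : R| < 1 -> c = c'.
Proof.
move=> cc'; apply/eqP; apply: contraLR cc' => neq_cc'; rewrite -leNgt.
case: (ltngtP c c') neq_cc' => // lt_cc' _.
  by rewrite distrC -(natrB _ (ltnW lt_cc')) normr_nat ler1n subn_gt0.
by rewrite -(natrB _ (ltnW lt_cc')) normr_nat ler1n subn_gt0.
Qed.

Lemma decode_near e (c : 'I_e) t : `|t - c%:R| < 2^-1 -> decode e t = c.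
Proof.
move=> tc; rewrite /decode; case: pickP => [c' tc'|no_c]; last by have := no_c c; rewrite tc.
apply: eq_nat_dist_lt1; apply: le_lt_trans (ler_distD t _ _) _.
rewrite distrC; apply: lt_le_trans (ltrD tc' tc) _.
by rewrite [X in _ <= X](splitr 1) mul1r.
Qed.

Lemma decode_nat e c : (c < e)%N -> decode e c%:R = c.
Proof. by move=> c_lt; apply: (decode_near (c := Ordinal c_lt)); rewrite subrr normr0 invr_gt0. Qed.

Definition near_code (I : finType) (e : nat) : set (option I -> R) :=
  fun z => exists c : 'I_e, `|z None - c%:R| < 2^-1.

Lemma near_code_box (I : finType) e (c : 'I_e) (a x : option I -> R) :
  box x a (2^-1 - `|a None - c%:R|) -> `|x None - c%:R| < 2^-1.
Proof.
move=> xa; rewrite -(subrK (a None) (x None)) -addrA.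
by apply: le_lt_trans (ler_normD _ _) _; rewrite -ltrBrDr; apply: xa.
Qed.

Lemma open_near_code (I : finType) e : open_set (@near_code I e).
Proof.
move=> a [c ac]; exists (2^-1 - `|a None - c%:R|); rewrite subr_gt0.
by split=> // x xa; exists c; apply: near_code_box xa.
Qed.

Lemma near_code_prodE k m (U : set (tup R k m)) e z : prodE U e z -> near_code e z.
Proof. by move=> [_ [c zc]]; exists c; rewrite zc subrr normr0 invr_gt0. Qed.

Definition recode (I I0 : finType) (e : nat) (s : I0 -> I) (h : nat -> nat)
    (z : option I -> R) : option I0 -> R :=
  fun o => if o is Some p then z (Some (s p)) else (h (decode e (z None)))%:R.

Lemma locally_subst_recode (I I0 : finType) e (s : I0 -> I) h :
  locally_subst (near_code e) (recode e s h).
Proof.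
move=> a [c ac]; exists (2^-1 - `|a None - c%:R|); rewrite subr_gt0; split=> //.
exists (fun o => if o is Some p then Some (Some (s p)) else None), (fun _ => (h c)%:R).
by move=> x xa; apply: funext => -[p|] //=; rewrite (decode_near (near_code_box xa)).
Qed.

End Decoding.

Lemma code_pair_lt (c0 c1 e0 e1 : nat) :
  (c0 < e0)%N -> (c1 < e1)%N -> (c0 + e0 * c1 < e0 * e1)%N.
Proof.
move=> c0_lt c1_lt; apply: (@leq_trans (e0 * c1.+1)).
  by rewrite mulnS ltn_add2r.
by rewrite leq_mul2l c1_lt orbT.
Qed.

Lemma code_pairK (c0 c1 e0 : nat) : (c0 < e0)%N ->
  ((c0 + e0 * c1) %% e0 = c0)%N /\ ((c0 + e0 * c1) %/ e0 = c1)%N.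
Proof.
move=> c0_lt; have e0_gt0 : (0 < e0)%N by apply: leq_ltn_trans c0_lt.
rewrite addnC mulnC modnMDl modn_small // divnMDl // divn_small //.
by rewrite addn0.
Qed.

Lemma ord_mul_gt0l e0 e1 (c : 'I_(e0 * e1)) : (0 < e0)%N.
Proof. by have /(leq_ltn_trans (leq0n _)) := ltn_ord c; rewrite muln_gt0 => /andP[]. Qed.

Section DisjointUnionFunctional.
Variables (R : realType) (n k0 k1 : nat) (L0 L1 : lk_linkage R n).
Variables (w0 : 'I_k0 -> vert L0) (w1 : 'I_k1 -> vert L1).
Variables (U0 : set (tup R k0 n)) (U1 : set (tup R k1 n)) (e0 e1 : nat).
Variables (sig0 : (option ('I_k0 * 'I_n) -> R) -> vert L0 * 'I_n -> R)
  (gam0 : (vert L0 * 'I_n -> R) -> option ('I_k0 * 'I_n) -> R)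
  (sig1 : (option ('I_k1 * 'I_n) -> R) -> vert L1 * 'I_n -> R)
  (gam1 : (vert L1 * 'I_n -> R) -> option ('I_k1 * 'I_n) -> R).

Local Notation L := (disj_union L0 L1).
Local Notation w := (lk_cat w0 w1).
Local Notation P0 := (prodE U0 e0).
Local Notation P1 := (prodE U1 e1).
Local Notation P := (prodE (lk_dprod U0 U1) (e0 * e1)).
Local Notation B0 := (config L0 `&` vmap w0 @^-1` U0).
Local Notation B1 := (config L1 `&` vmap w1 @^-1` U1).
Local Notation B := (config L `&` vmap w @^-1` lk_dprod U0 U1).

Hypotheses (sig0_in : forall z, P0 z -> B0 (sig0 z)) (gam0_in : forall x, B0 x -> P0 (gam0 x))
  (gam0K : forall z, P0 z -> gam0 (sig0 z) = z) (sig0K : forall x, B0 x -> sig0 (gam0 x) = x)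
  (vmap_sig0 : forall z, P0 z -> vmap w0 (sig0 z) = (fun p => z (Some p))).
Hypotheses (sig1_in : forall z, P1 z -> B1 (sig1 z)) (gam1_in : forall x, B1 x -> P1 (gam1 x))
  (gam1K : forall z, P1 z -> gam1 (sig1 z) = z) (sig1K : forall x, B1 x -> sig1 (gam1 x) = x)
  (vmap_sig1 : forall z, P1 z -> vmap w1 (sig1 z) = (fun p => z (Some p))).

(** [E0 x E1] is coded by [c0 + e0 * c1]. *)
Definition code_l :=
  @recode R _ _ (e0 * e1) (fun p : 'I_k0 * 'I_n => (lshift k1 p.1, p.2)) (modn^~ e0).
Definition code_r :=
  @recode R _ _ (e0 * e1) (fun p : 'I_k1 * 'I_n => (rshift k0 p.1, p.2)) (divn^~ e0).

Definition sig_disj z : vert L * 'I_n -> R := cfg_join (sig0 (code_l z)) (sig1 (code_r z)).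

Definition gam_disj phi : option ('I_(k0 + k1) * 'I_n) -> R :=
  fun o => if o is Some p then vmap w phi p
           else gam0 (cfg_l phi) None + e0%:R * gam1 (cfg_r phi) None.

Lemma code_l_in z : P z -> P0 (code_l z).
Proof.
move=> [[U0z _] [c zc]]; split=> //; have e0_gt0 := ord_mul_gt0l c.
by exists (Ordinal (ltn_pmod c e0_gt0)); rewrite /code_l /recode zc decode_nat.
Qed.

Lemma code_r_in z : P z -> P1 (code_r z).
Proof.
move=> [[_ U1z] [c zc]]; split=> //; have e0_gt0 := ord_mul_gt0l c.
have c_lt : (c %/ e0 < e1)%N by rewrite ltn_divLR // [(e1 * e0)%N]mulnC.
by exists (Ordinal c_lt); rewrite /code_r /recode zc decode_nat.
Qed.

Lemma cfg_l_in phi : B phi -> B0 (cfg_l phi).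
Proof.
by move=> [/config_disj_union[? _] [U0phi _]]; split; rewrite // /preimage /= -(tup_l_vmap w0 w1).
Qed.

Lemma cfg_r_in phi : B phi -> B1 (cfg_r phi).
Proof.
by move=> [/config_disj_union[_ ?] [_ U1phi]]; split; rewrite // /preimage /= -(tup_r_vmap w0 w1).
Qed.

Lemma vmap_sig_disj z : P z -> vmap w (sig_disj z) = (fun p => z (Some p)).
Proof.
move=> Pz; rewrite vmap_cat cfg_l_join cfg_r_join.
by rewrite (vmap_sig0 (code_l_in Pz)) (vmap_sig1 (code_r_in Pz)) (tup_cat_lr (fun p => z (Some p))).
Qed.

Lemma sig_disj_in z : P z -> B (sig_disj z).
Proof.
move=> Pz; split; last by rewrite /preimage /= vmap_sig_disj //; case: Pz.
by apply: config_join; [case: (sig0_in (code_l_in Pz)) | case: (sig1_in (code_r_in Pz))].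
Qed.

Lemma gam_disj_code phi : B phi -> exists (c0 : 'I_e0) (c1 : 'I_e1),
  [/\ gam0 (cfg_l phi) None = c0%:R, gam1 (cfg_r phi) None = c1%:R
    & gam_disj phi None = (c0 + e0 * c1)%N%:R].
Proof.
move=> Bphi; have [_ [c0 c0E]] := gam0_in (cfg_l_in Bphi).
have [_ [c1 c1E]] := gam1_in (cfg_r_in Bphi).
by exists c0, c1; split => //; rewrite /gam_disj c0E c1E natrD natrM.
Qed.

Lemma gam_disj_in phi : B phi -> P (gam_disj phi).
Proof.
move=> Bphi; split; first by case: Bphi.
have [c0 [c1 [_ _ ->]]] := gam_disj_code Bphi.
by exists (Ordinal (code_pair_lt (ltn_ord c0) (ltn_ord c1))).
Qed.

Lemma gam_disjK z : P z -> gam_disj (sig_disj z) = z.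
Proof.
move=> Pz; apply: funext => -[p|]; first by rewrite /gam_disj vmap_sig_disj.
rewrite /gam_disj /sig_disj cfg_l_join cfg_r_join (gam0K (code_l_in Pz)) (gam1K (code_r_in Pz)).
case: Pz => _ [c zc]; rewrite /code_l /code_r /recode zc decode_nat // -natrM -natrD.
by rewrite (mulnC e0 (c %/ e0)%N) addnC -divn_eq.
Qed.

Lemma gam_input0 x p : B0 x -> gam0 x (Some p) = vmap w0 x p.
Proof. by move=> B0x; rewrite -{2}(sig0K B0x) (vmap_sig0 (gam0_in B0x)). Qed.

Lemma gam_input1 x p : B1 x -> gam1 x (Some p) = vmap w1 x p.
Proof. by move=> B1x; rewrite -{2}(sig1K B1x) (vmap_sig1 (gam1_in B1x)). Qed.

Lemma sig_disjK phi : B phi -> sig_disj (gam_disj phi) = phi.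
Proof.
move=> Bphi; have [c0 [c1 [c0E c1E gamE]]] := gam_disj_code Bphi.
have [code_mod code_div] := code_pairK c1 (ltn_ord c0); rewrite /sig_disj.
have code_lt := code_pair_lt (ltn_ord c0) (ltn_ord c1).
have -> : code_l (gam_disj phi) = gam0 (cfg_l phi).
  apply: funext => -[p|]; last by rewrite /code_l /recode gamE decode_nat // code_mod c0E.
  by rewrite (gam_input0 _ (cfg_l_in Bphi)) -(tup_l_vmap w0 w1).
have -> : code_r (gam_disj phi) = gam1 (cfg_r phi).
  apply: funext => -[p|]; last by rewrite /code_r /recode gamE decode_nat // code_div c1E.
  by rewrite (gam_input1 _ (cfg_r_in Bphi)) -(tup_r_vmap w0 w1).
by rewrite sig0K ?sig1K ?cfg_join_lr //; [apply: cfg_r_in | apply: cfg_l_in].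
Qed.

Lemma continuous_on_sig_disj :
  continuous_on P0 sig0 -> continuous_on P1 sig1 -> continuous_on P sig_disj.
Proof.
have code_cont (I0 : finType) (s : I0 -> 'I_(k0 + k1) * 'I_n) h :
    continuous_on P (@recode R _ _ (e0 * e1) s h).
  apply: (continuous_on_locally_subst (@locally_subst_recode R _ _ (e0 * e1) s h)).
  exact: near_code_prodE.
move=> sig0_cont sig1_cont; apply/continuous_onP => -[[x|y] i].
  exact: continuous_on1_comp ((continuous_onP _ _).1 sig0_cont (x, i)) (code_cont _ _ _) code_l_in.
exact: continuous_on1_comp ((continuous_onP _ _).1 sig1_cont (y, i)) (code_cont _ _ _) code_r_in.
Qed.

Lemma continuous_on_gam_disj :
  continuous_on B0 gam0 -> continuous_on B1 gam1 -> continuous_on B gam_disj.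
Proof.
move=> gam0_cont gam1_cont; apply/continuous_onP => -[p|]; first exact: continuous_on1_coord.
apply: continuous_on1_lin.
  exact: (continuous_on1_reindex (f := gam0^~ None) cfg_l_in ((continuous_onP _ _).1 gam0_cont _)).
exact: (continuous_on1_reindex (f := gam1^~ None) cfg_r_in ((continuous_onP _ _).1 gam1_cont _)).
Qed.

Lemma restr_analytic_sig_disj :
  restr_analytic P0 sig0 -> restr_analytic P1 sig1 -> restr_analytic P sig_disj.
Proof.
have code_an (I0 : finType) (s : I0 -> 'I_(k0 + k1) * 'I_n) h (B' : set (option I0 -> R)) f :
    (forall z, P z -> B' (recode (e0 * e1) s h z)) ->
    restr_analytic1 B' f -> restr_analytic1 P (fun z => f (recode (e0 * e1) s h z)).
  move=> PB'; apply: (restr_analytic1_comp (@locally_subst_recode R _ _ (e0 * e1) s h)) => //.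
    exact: open_near_code.
  exact: near_code_prodE.
move=> sig0_an sig1_an; apply/restr_analyticP => -[[x|y] i].
  exact: code_an code_l_in ((restr_analyticP _ _).1 sig0_an (x, i)).
exact: code_an code_r_in ((restr_analyticP _ _).1 sig1_an (y, i)).
Qed.

Lemma restr_analytic_gam_disj :
  restr_analytic B0 gam0 -> restr_analytic B1 gam1 -> restr_analytic B gam_disj.
Proof.
move=> gam0_an gam1_an; apply/restr_analyticP => -[p|]; first exact: restr_analytic1_coord.
apply: restr_analytic1_lin.
  exact: (restr_analytic1_reindex (f := gam0^~ None) cfg_l_in ((restr_analyticP _ _).1 gam0_an _)).
exact: (restr_analytic1_reindex (f := gam1^~ None) cfg_r_in ((restr_analyticP _ _).1 gam1_an _)).
Qed.

End DisjointUnionFunctional.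

Lemma lk_functional_disj_union (R : realType) (n k0 k1 m0 m1 : nat)
    (L0 L1 : lk_linkage R n) (w0 : 'I_k0 -> vert L0) (v0 : 'I_m0 -> vert L0)
    (w1 : 'I_k1 -> vert L1) (v1 : 'I_m1 -> vert L1)
    (f0 : tup R k0 n -> tup R m0 n) (f1 : tup R k1 n -> tup R m1 n)
    (U0 : set (tup R k0 n)) (U1 : set (tup R k1 n)) :
  lk_functional w0 v0 f0 U0 -> lk_functional w1 v1 f1 U1 ->
  lk_functional (lk_cat w0 w1) (lk_cat v0 v1) (lk_fprod f0 f1) (lk_dprod U0 U1).
Proof.
move=> [f0_q [U0q [e0 [sig0 [[gam0 [sig0_in [gam0_in [gam0K [sig0K
  [sig0_cont [gam0_cont [sig0_an gam0_an]]]]]]]] vmap_sig0]]]]].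
move=> [f1_q [U1q [e1 [sig1 [[gam1 [sig1_in [gam1_in [gam1K [sig1K
  [sig1_cont [gam1_cont [sig1_an gam1_an]]]]]]]] vmap_sig1]]]]].
split; first exact: quasifunctional_disj_union.
split; first exact: qdomain_disj_union.
exists (e0 * e1)%N, (sig_disj e0 e1 sig0 sig1); split; last by apply: vmap_sig_disj.
exists (gam_disj w0 w1 e0 gam0 gam1).
split; first by move=> z; apply: sig_disj_in.
split; first by move=> phi; apply: gam_disj_in.
split; first by move=> z; apply: gam_disjK.
split; first by move=> phi; apply: sig_disjK.
split; first exact: continuous_on_sig_disj.
split; first exact: continuous_on_gam_disj.
by split; [apply: restr_analytic_sig_disj | apply: restr_analytic_gam_disj].
Qed.

(** * Identifying the input vertices *)

Section Diagonal.
Variables (R : realType) (n k : nat).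

Definition ord_fold (i : 'I_(k + k)) : 'I_k :=
  match fintype.split i with inl j | inr j => j end.

Definition tup_diag : tup R k n -> tup R (k + k) n := reindex (fun p => (ord_fold p.1, p.2)).

Definition tup_diagonal : set (tup R (k + k) n) := fun u => tup_l u = tup_r u.

Lemma tup_l_diag u : tup_l (tup_diag u) = u.
Proof. by apply: funext => -[j i]; rewrite /tup_l /tup_diag /reindex /ord_fold /= split_lshift. Qed.

Lemma tup_r_diag u : tup_r (tup_diag u) = u.
Proof. by apply: funext => -[j i]; rewrite /tup_r /tup_diag /reindex /ord_fold /= split_rshift. Qed.

Lemma tup_diagonal_diag u : tup_diagonal (tup_diag u).
Proof. by rewrite /tup_diagonal tup_l_diag tup_r_diag. Qed.

Lemma tup_diag_l u : tup_diagonal u -> tup_diag (tup_l u) = u.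
Proof.
move=> u_diag; apply: funext => -[i p]; rewrite /tup_diag /reindex /ord_fold /=.
case: split_ordP => j -> //; exact: (congr1 (fun u => u (j, p)) u_diag).
Qed.

End Diagonal.

Arguments tup_diag {R n k}.
Arguments tup_diagonal {R n k}.

Section Glue.
Variables (R : realType) (n k : nat) (L0 L1 : lk_linkage R n).
Variables (w0 : 'I_k -> vert L0) (w1 : 'I_k -> vert L1).
Local Notation L := (disj_union L0 L1).
Local Notation L' := (glue_linkage w0 w1).
Local Notation w := (lk_cat w0 w1).
Local Notation proj := (glue_proj w0 w1).

Definition glue_input : 'I_k -> vert L' := fun j => proj (inl (w0 j)).
Local Notation w' := glue_input.

Lemma glue_connect_sym : connect_sym (glue_rel w0 w1).
Proof. by apply: sym_connect_sym => x y; apply: eq_existsb => j; rewrite orbC. Qed.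

Lemma glue_proj_eq x y : connect (glue_rel w0 w1) x y -> proj x = proj y.
Proof.
move=> xy; apply: val_inj; apply/setP => z.
by rewrite !inE (same_connect glue_connect_sym xy).
Qed.

Lemma glue_proj_connect x y : proj x = proj y -> connect (glue_rel w0 w1) x y.
Proof.
move/(congr1 val) => /= xy; have : y \in glue_class w0 w1 y by rewrite inE connect0.
by rewrite -xy inE.
Qed.

Lemma glue_proj_input j : proj (inr (w1 j)) = proj (inl (w0 j)).
Proof. by apply: glue_proj_eq; apply: connect1; apply/existsP; exists j; rewrite !eqxx orbT. Qed.

Definition glue_repr (X : glue_vert w0 w1) : vert L := xchoose (existsP (valP X)).

Lemma glue_proj_repr X : proj (glue_repr X) = X.
Proof. by apply: val_inj => /=; have /eqP -> := xchooseP (existsP (valP X)). Qed.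

Definition glue_lift : (vert L' * 'I_n -> R) -> vert L * 'I_n -> R :=
  reindex (fun p => (proj p.1, p.2)).
Definition glue_drop : (vert L * 'I_n -> R) -> vert L' * 'I_n -> R :=
  reindex (fun p => (glue_repr p.1, p.2)).

(** Configurations of [L'] are the configurations of [L] with equal inputs. *)
Definition compatible (phi : vert L * 'I_n -> R) : Prop := tup_diagonal (vmap w phi).

Lemma compatible_connect phi x y i : compatible phi ->
  connect (glue_rel w0 w1) x y -> phi (x, i) = phi (y, i).
Proof.
move=> phi_compat /connectP[p + ->]; elim: p x => [|z p IHp] x //= /andP[/existsP[j xz] zp].
rewrite -(IHp z zp); have := congr1 (fun u => u (j, i)) phi_compat.
rewrite /tup_l /tup_r /vmap /lk_cat /= split_lshift split_rshift.
by case/orP: xz => /andP[/eqP -> /eqP ->].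
Qed.

Lemma config_glue phi' : config L' phi' <-> config L (glue_lift phi').
Proof. by []. Qed.

Lemma glue_dropK phi' : glue_drop (glue_lift phi') = phi'.
Proof. by apply: funext => -[X i]; rewrite /glue_drop /glue_lift /reindex /= glue_proj_repr. Qed.

Lemma glue_liftK phi : compatible phi -> glue_lift (glue_drop phi) = phi.
Proof.
move=> phi_compat; apply: funext => -[x i]; rewrite /glue_lift /glue_drop /reindex /=.
apply: compatible_connect => //.
by apply: glue_proj_connect; rewrite glue_proj_repr.
Qed.

Lemma vmap_glue_lift phi' : vmap w (glue_lift phi') = tup_diag (vmap w' phi').
Proof.
apply: funext => -[i p]; rewrite /vmap /glue_lift /tup_diag /reindex /lk_cat /ord_fold /=.
by case: (fintype.split i) => j //=; rewrite glue_proj_input.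
Qed.

Lemma compatible_glue_lift phi' : compatible (glue_lift phi').
Proof. by rewrite /compatible vmap_glue_lift; apply: tup_diagonal_diag. Qed.

Lemma vmap_glue_drop phi : compatible phi -> vmap w' (glue_drop phi) = tup_l (vmap w phi).
Proof. by move=> phi_compat; rewrite -{2}(glue_liftK phi_compat) vmap_glue_lift tup_l_diag. Qed.

Lemma qdomain_glue u : qdomain w' u <-> qdomain w (tup_diag u).
Proof.
split=> [[phi' phi'_cfg <-]|[phi phi_cfg phiE]].
  by exists (glue_lift phi'); rewrite ?vmap_glue_lift.
have phi_compat : compatible phi by rewrite /compatible phiE; apply: tup_diagonal_diag.
exists (glue_drop phi); first by apply/config_glue; rewrite glue_liftK.
by rewrite vmap_glue_drop // phiE tup_l_diag.
Qed.

Lemma reindex_bij_config_glue :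
  reindex_bij (config L') (config L `&` compatible)
    (fun p => (proj p.1, p.2)) (fun p => (glue_repr p.1, p.2)).
Proof.
split=> [phi' phi'_cfg|phi [phi_cfg phi_compat]|phi' _|phi [_ phi_compat]].
- by split; last exact: compatible_glue_lift.
- by apply/config_glue; rewrite glue_liftK.
- exact: glue_dropK.
- exact: glue_liftK.
Qed.

Lemma reindex_bij_glue (U : set (tup R (k + k) n)) :
  reindex_bij (config L' `&` vmap w' @^-1` (tup_diag @^-1` U))
    (config L `&` vmap w @^-1` U `&` compatible)
    (fun p => (proj p.1, p.2)) (fun p => (glue_repr p.1, p.2)).
Proof.
split=> [phi' [phi'_cfg phi'U]|phi [[phi_cfg phiU] phi_compat]|phi' _|phi [_ phi_compat]].
- split; last exact: compatible_glue_lift.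
  by split=> //; rewrite /preimage /= vmap_glue_lift.
- split; first by apply/config_glue; rewrite glue_liftK.
  by rewrite /preimage /= vmap_glue_drop // tup_diag_l.
- exact: glue_dropK.
- exact: glue_liftK.
Qed.

Lemma reindex_bij_qdomain_glue :
  reindex_bij (qdomain w `&` tup_diagonal) (qdomain w')
    (fun p => (lshift k p.1, p.2)) (fun p => (ord_fold p.1, p.2)).
Proof.
split=> [u [qu u_diag]|u' qu'|u [_ u_diag]|u' _].
- by apply/qdomain_glue; rewrite [tup_diag _]tup_diag_l.
- by split; [apply/qdomain_glue | apply: tup_diagonal_diag].
- exact: tup_diag_l.
- exact: tup_l_diag.
Qed.

Lemma reindex_bij_prodE_glue (U : set (tup R (k + k) n)) e :
  reindex_bij (prodE (tup_diag @^-1` U) e)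
    (prodE U e `&` (fun z => tup_diagonal (fun p => z (Some p))))
    (omap (fun p => (ord_fold p.1, p.2))) (omap (fun p => (lshift k p.1, p.2))).
Proof.
split=> [z' [z'U z'_code]|z [[zU z_code] z_diag]|z' _|z [_ z_diag]].
- by split; [split | exact: (tup_diagonal_diag (fun p => z' (Some p)))].
- by split=> //; move: zU; rewrite /preimage /= -{1}(tup_diag_l z_diag).
- by apply: funext => -[[j i]|] //; rewrite /reindex /ord_fold /= split_lshift.
- apply: funext => -[p|] //; rewrite /reindex /=.
  exact: (congr1 (fun u => u p) (tup_diag_l z_diag)).
Qed.

Section GluedFunctional.
Variables (m : nat) (v : 'I_m -> vert L) (f : tup R (k + k) n -> tup R m n).
Variable U : set (tup R (k + k) n).

Lemma quasifunctional_glue : quasifunctional w v f ->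
  quasifunctional w' (fun i => proj (v i)) (fun u => f (tup_diag u)).
Proof. by move=> f_q phi' /config_glue/f_q; rewrite vmap_glue_lift. Qed.

Lemma qdomain_sub_glue : U `<=` qdomain w -> tup_diag @^-1` U `<=` qdomain w'.
Proof. by move=> Uq u /Uq /qdomain_glue. Qed.

Lemma lk_strongly_functional_glue : lk_strongly_functional w v f U ->
  lk_strongly_functional w' (fun i => proj (v i)) (fun u => f (tup_diag u)) (tup_diag @^-1` U).
Proof.
move=> [f_q [Uq iso]]; split; first exact: quasifunctional_glue.
split; first exact: qdomain_sub_glue.
have iso_compat : analytic_iso (config L `&` compatible) (qdomain w `&` tup_diagonal) (vmap w).
  apply: analytic_iso_sub iso; first by move=> u [].
  move=> phi; split=> [[phi_cfg phi_compat]|[phi_cfg [_ phi_compat]]] //.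
  by split=> //; split=> //; exists phi.
apply: analytic_iso_ext (analytic_iso_reindex reindex_bij_config_glue
  reindex_bij_qdomain_glue iso_compat) => phi' _.
by rewrite -[RHS](tup_l_diag (vmap w' phi')) -vmap_glue_lift.
Qed.

Lemma lk_functional_glue : lk_functional w v f U ->
  lk_functional w' (fun i => proj (v i)) (fun u => f (tup_diag u)) (tup_diag @^-1` U).
Proof.
move=> [f_q [Uq [e [sig [iso vmap_sig]]]]]; split; first exact: quasifunctional_glue.
split; first exact: qdomain_sub_glue.
have [_ [sig_in _]] := iso.
have iso_compat : analytic_iso (prodE U e `&` (fun z => tup_diagonal (fun p => z (Some p))))
    (config L `&` vmap w @^-1` U `&` compatible) sig.
  apply: analytic_iso_sub iso; first by move=> phi [].
  move=> z; rewrite /compatible; split=> [[Pz z_diag]|[Pz [_]]]; last by rewrite vmap_sig.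
  by split=> //; split; [apply: sig_in | rewrite vmap_sig].
exists e, (fun z => glue_drop (sig (reindex (omap (fun p => (ord_fold p.1, p.2))) z))).
split.
  exact: analytic_iso_reindex (reindex_bij_prodE_glue U e)
    (reindex_bij_sym (reindex_bij_glue U)) iso_compat.
move=> z Pz; have [to_diag _ _ _] := reindex_bij_prodE_glue U e.
have [Pz' _] := to_diag z Pz.
have diag_z := tup_diagonal_diag (fun p => z (Some p)).
by rewrite vmap_glue_drop /compatible vmap_sig //; exact: (tup_l_diag (fun p => z (Some p))).
Qed.

End GluedFunctional.
End Glue.

Theorem lemma4p2 :
  (* (1) disjoint union *)
  (forall (R : realType) (n k0 k1 m0 m1 : nat) (L0 L1 : lk_linkage R n)
     (w0 : 'I_k0 -> vert L0) (v0 : 'I_m0 -> vert L0)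
     (w1 : 'I_k1 -> vert L1) (v1 : 'I_m1 -> vert L1)
     (f0 : tup R k0 n -> tup R m0 n) (f1 : tup R k1 n -> tup R m1 n)
     (U0 : set (tup R k0 n)) (U1 : set (tup R k1 n)),
     cabled_linkage L0 -> cabled_linkage L1 ->
     (lk_functional w0 v0 f0 U0 -> lk_functional w1 v1 f1 U1 ->
        lk_functional (lk_cat w0 w1) (lk_cat v0 v1) (lk_fprod f0 f1) (lk_dprod U0 U1)) /\
     (lk_strongly_functional w0 v0 f0 U0 -> lk_strongly_functional w1 v1 f1 U1 ->
        lk_strongly_functional (lk_cat w0 w1) (lk_cat v0 v1) (lk_fprod f0 f1) (lk_dprod U0 U1)))
  /\
  (* (2) identifying the j-th input vertices, k0 = k1 = k *)
  (forall (R : realType) (n k m0 m1 : nat) (L0 L1 : lk_linkage R n)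
     (w0 : 'I_k -> vert L0) (v0 : 'I_m0 -> vert L0)
     (w1 : 'I_k -> vert L1) (v1 : 'I_m1 -> vert L1)
     (f0 : tup R k n -> tup R m0 n) (f1 : tup R k n -> tup R m1 n)
     (U0 : set (tup R k n)) (U1 : set (tup R k n)),
     cabled_linkage L0 -> cabled_linkage L1 ->
     let L' := glue_linkage w0 w1 in
     let w' : 'I_k -> vert L' := fun j => glue_proj w0 w1 (inl (w0 j)) in
     let v' : 'I_(m0 + m1) -> vert L' := fun i => glue_proj w0 w1 (lk_cat v0 v1 i) in
     (lk_functional w0 v0 f0 U0 -> lk_functional w1 v1 f1 U1 ->
        lk_functional w' v' (lk_fpair f0 f1) (U0 `&` U1)) /\
     (lk_strongly_functional w0 v0 f0 U0 -> lk_strongly_functional w1 v1 f1 U1 ->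
        lk_strongly_functional w' v' (lk_fpair f0 f1) (U0 `&` U1))).
Proof.
split=> [R n k0 k1 m0 m1 L0 L1 w0 v0 w1 v1 f0 f1 U0 U1 _ _|].
  by split; [apply: lk_functional_disj_union | apply: lk_strongly_functional_disj_union].
move=> R n k m0 m1 L0 L1 w0 v0 w1 v1 f0 f1 U0 U1 _ _ L' w' v'.
have fpairE : lk_fpair f0 f1 = (fun u => lk_fprod f0 f1 (tup_diag u)).
  by apply: funext => u; rewrite /lk_fprod tup_l_diag tup_r_diag.
have capE : U0 `&` U1 = tup_diag @^-1` lk_dprod U0 U1.
  by apply: funext => u; rewrite /preimage /lk_dprod /= tup_l_diag tup_r_diag.
rewrite fpairE capE; split=> [func0 func1|sfunc0 sfunc1].
  exact/lk_functional_glue/lk_functional_disj_union.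
exact/lk_strongly_functional_glue/lk_strongly_functional_disj_union.
Qed.
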